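(* Let $v=(v_n)_{n\in\mathbb{N}}\in\ell^1$ with $v_n>0$ for all $n$ and $\sum_{n=1}^\infty v_n=1$, and let $\tau_v(f)=\sum_{n=1}^\infty v_n f(1/2^{n-1})$ for $f\in C(\overline{\mathbb{N}})$. The following are equivalent: (1) $\tau_v(\varphi_n)=0$ for all $n\in\mathbb{N}$; (2) $v=(2^{-n})_{n\in\mathbb{N}}$.
   Context: $\mathbb{N}=\{1,2,\dots\}$, $\overline{\mathbb{N}}=\{1/2^{n-1}: n\in\mathbb{N}\}\cup\{0\}\subseteq\mathbb{R}$. For $n\in\mathbb{N}_0$, $\varphi_n:\overline{\mathbb{N}}\to\mathbb{R}$ is defined by $\varphi_n(x)=0$ if $x>1/2^{n-1}$, $\varphi_n(x)=-1$ if $x=1/2^{n-1}$, and $\varphi_n(x)=1$ if $x<1/2^{n-1}$. *)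

From Stdlib Require Import Reals.
From Coquelicot Require Import Coquelicot.
Open Scope R_scope.

(* The point 1/2^(n-1) of \overline{N}, written as 2^(1-n) (so n = 0 gives 2). *)
Definition pt (n : nat) : R := powerRZ 2 (1 - Z.of_nat n).

Definition phi (n : nat) (x : R) : R :=
  if Rlt_dec (pt n) x then 0
  else if Req_EM_T x (pt n) then -1 else 1.

(* tau_v(f) = sum_{n>=1} v_n f(1/2^(n-1)); the sequence v is indexed from 1
   (v 0 is irrelevant). Only the values of f on \overline{N} matter. *)
Definition tau (v : nat -> R) (f : R -> R) : R :=
  Series (fun k => v (S k) * f (pt (S k))).

(* Splitting tau_v(phi_n) at the point 1/2^(n-1) gives
   tau_v(phi_n) = R_n - v_n, where R_n = sum_{k>n} v_k. So (1) says v_n = R_n for all n;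
   as R_(n-1) = v_n + R_n, this means R_n = R_(n-1)/2, and R_0 = 1 forces
   R_n = v_n = 2^-n. Conversely, for v_n = 2^-n the geometric series gives R_n = 2^-n = v_n. *)

From Stdlib Require Import Reals Arith Lra Lia.
From Coquelicot Require Import Coquelicot.
Open Scope R_scope.

Lemma pt_pow (n : nat) : pt n = 2 / 2 ^ n.
Proof.
  unfold pt. replace (1 - Z.of_nat n)%Z with (1 + - Z.of_nat n)%Z by lia.
  rewrite powerRZ_add by lra. rewrite powerRZ_neg', pow_powerRZ. simpl. unfold Rdiv. ring.
Qed.

Lemma pt_lt (m n : nat) : (m < n)%nat -> pt n < pt m.
Proof.
  intro Hmn. rewrite !pt_pow. apply Rmult_lt_compat_l; [lra |].
  apply Rinv_lt_contravar.
  - apply Rmult_lt_0_compat; apply pow_lt; lra.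
  - apply Rlt_pow; [lra | exact Hmn].
Qed.

Lemma phi_pt (p k : nat) :
  phi (S p) (pt (S k)) = if lt_dec k p then 0 else if Nat.eq_dec k p then -1 else 1.
Proof.
  unfold phi. destruct (lt_dec k p) as [Hkp | Hkp].
  - destruct (Rlt_dec (pt (S p)) (pt (S k))) as [_ | Hn]; [reflexivity |].
    exfalso; apply Hn, pt_lt; lia.
  - destruct (Nat.eq_dec k p) as [-> | Hkp'].
    + destruct (Rlt_dec (pt (S p)) (pt (S p))) as [Hlt | _]; [lra |].
      destruct (Req_EM_T (pt (S p)) (pt (S p))); [reflexivity | congruence].
    + assert (Hlt : pt (S k) < pt (S p)) by (apply pt_lt; lia).
      destruct (Rlt_dec (pt (S p)) (pt (S k))) as [Hgt | _]; [lra |].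
      destruct (Req_EM_T (pt (S k)) (pt (S p))) as [Heq | _]; [lra | reflexivity].
Qed.

Lemma Series_zero_prefix (a : nat -> R) (p : nat) :
  ex_series a -> (forall k, (k < p)%nat -> a k = 0) ->
  Series a = Series (fun k => a (p + k)%nat).
Proof.
  revert a. induction p as [| p IH]; intros a ha hzero.
  - reflexivity.
  - rewrite Series_incr_1 by exact ha.
    rewrite hzero, Rplus_0_l by lia.
    apply (IH (fun k => a (S k))).
    + now apply (ex_series_incr_1 a).
    + intros k Hk. apply hzero. lia.
Qed.

Definition tail_sum (v : nat -> R) (j : nat) : R := Series (fun k => v (S (j + k))).

Section TailSums.

Variable v : nat -> R.
Hypothesis hex : ex_series (fun k => v (S k)).

Lemma tail_sum_0 : is_series (fun k => v (S k)) 1 -> tail_sum v 0 = 1.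
Proof. apply is_series_unique. Qed.

Lemma tail_sum_S (j : nat) : tail_sum v j = v (S j) + tail_sum v (S j).
Proof.
  unfold tail_sum. rewrite Series_incr_1.
  - rewrite Nat.add_0_r. apply f_equal, Series_ext. intro k. now rewrite Nat.add_succ_r.
  - now apply (ex_series_incr_n (fun k => v (S k)) j).
Qed.

Lemma tau_phi (p : nat) : tau v (phi (S p)) = tail_sum v (S p) - v (S p).
Proof.
  unfold tau. set (a := fun k => v (S k) * phi (S p) (pt (S k))).
  assert (Ha : ex_series a).
  { apply (ex_series_incr_n a (S p)).
    apply (ex_series_ext (fun k => v (S (S p + k)))).
    - intro k. unfold a. rewrite phi_pt.
      destruct (lt_dec (S p + k) p); [lia |]. destruct (Nat.eq_dec (S p + k) p); [lia |].
      now rewrite Rmult_1_r.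
    - now apply (ex_series_incr_n (fun k => v (S k)) (S p)). }
  rewrite (Series_zero_prefix a p Ha).
  2:{ intros k Hk. unfold a. rewrite phi_pt. destruct (lt_dec k p); [ring | lia]. }
  rewrite Series_incr_1 by now apply (ex_series_incr_n a p).
  unfold tail_sum, a, Rminus. rewrite phi_pt, Nat.add_0_r.
  destruct (lt_dec p p); [lia |]. destruct (Nat.eq_dec p p); [| lia].
  rewrite Rplus_comm. apply f_equal2; [| ring]. apply Series_ext. intro k.
  rewrite phi_pt.
  destruct (lt_dec (p + S k) p); [lia |]. destruct (Nat.eq_dec (p + S k) p); [lia |].
  now rewrite Nat.add_succ_r, Rmult_1_r.
Qed.

Lemma tail_sum_halving :
  (forall p, v (S p) = tail_sum v (S p)) ->
  forall j, tail_sum v j = tail_sum v 0 / 2 ^ j.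
Proof.
  intros Hv j. induction j as [| j IH].
  - simpl. field.
  - rewrite tail_sum_S, <- Hv in IH. rewrite <- Hv. simpl.
    unfold Rdiv in *. rewrite Rinv_mult. lra.
Qed.

End TailSums.

Lemma tail_sum_inv_pow2 (v : nat -> R) :
  (forall n, (1 <= n)%nat -> v n = / 2 ^ n) -> forall j, tail_sum v j = / 2 ^ j.
Proof.
  intros Hv j. unfold tail_sum.
  rewrite (Series_ext _ (fun k => / 2 ^ S j * (/ 2) ^ k)).
  2:{ intro k. rewrite Hv by lia. now rewrite pow_inv, <- Rinv_mult, <- pow_add. }
  rewrite Series_scal_l, (is_series_unique _ (/ (1 - / 2))).
  - assert (0 < 2 ^ j) by (apply pow_lt; lra). simpl. field. lra.
  - apply is_series_geom. rewrite Rabs_pos_eq; lra.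
Qed.

Theorem proposition3p5 (v : nat -> R)
  (hpos : forall n : nat, (1 <= n)%nat -> 0 < v n)
  (hsum : is_series (fun k => v (S k)) 1) :
  (forall n : nat, (1 <= n)%nat -> tau v (phi n) = 0) <->
  (forall n : nat, (1 <= n)%nat -> v n = / 2 ^ n).
Proof.
  assert (hex : ex_series (fun k => v (S k))) by now exists 1.
  split.
  - intros Htau.
    assert (Hv : forall p, v (S p) = tail_sum v (S p)).
    { intro p. specialize (Htau (S p) ltac:(lia)). rewrite tau_phi in Htau by exact hex.
      lra. }
    intros [| p] Hn; [lia |].
    rewrite Hv, (tail_sum_halving v hex Hv), (tail_sum_0 v hsum). apply Rmult_1_l.
  - intros Hv [| p] Hn; [lia |].
    rewrite tau_phi, tail_sum_inv_pow2, Hv by (assumption || lia). ring.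
Qed.
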